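(* Let $Y$ be a real normed linear space and let $T\in L(\ell_1^n,Y)$, $T\neq\theta$, be approximately smooth (i.e. $\varepsilon$-smooth for some $\varepsilon\in[0,2)$). Then $M_T=\{\pm u\}$ for some $u\in\operatorname{Ext}B_{\ell_1^n}$.
   Context: $\ell_1^n$ is $\mathbb{R}^n$ with the $\ell_1$ norm; $L(\ell_1^n,Y)$ is the space of bounded linear operators with operator norm, and smoothness refers to $T$ as an element of this space. For a normed space $Z$ and $z\neq\theta$, $J(z)=\{\phi\in S_{Z^*}:\phi(z)=\|z\|\}$, and $z$ is $\varepsilon$-smooth if $\sup_{\phi,\psi\in J(z)}\|\phi-\psi\|\le\varepsilon$. $M_T=\{x\in S_{\ell_1^n}:\|Tx\|=\|T\|\}$; $\operatorname{Ext}B_{\ell_1^n}$ is the set of extreme points of the closed unit ball of $\ell_1^n$. *)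

From HB Require Import structures.
From mathcomp Require Import all_boot all_order all_algebra.
From mathcomp Require Import all_classical all_reals all_analysis.
Set Implicit Arguments. Unset Strict Implicit. Unset Printing Implicit Defensive.
Import Order.TTheory GRing.Theory Num.Theory.
Import numFieldNormedType.Exports.
Local Open Scope classical_set_scope.
Local Open Scope ring_scope.

(* ell_1^n : row vectors 'rV[R]_n with the ell_1 norm *)
Definition norm1 {R : realType} {n : nat} (x : 'rV[R]_n) : R :=
  \sum_(i < n) `|x 0 i|.

Definition ball1 {R : realType} {n : nat} : set 'rV[R]_n :=
  [set x | norm1 x <= 1].

Definition ExtB1 {R : realType} {n : nat} : set 'rV[R]_n :=
  [set x | ball1 x /\
     forall (y z : 'rV[R]_n) (t : R), ball1 y -> ball1 z -> 0 < t < 1 ->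
       x = t *: y + (1 - t) *: z -> y = z].

(* linear maps ell_1^n -> Y  (all of them are bounded: finite dimension) *)
Definition islin {R : realType} {n : nat} {Y : normedModType R}
  (T : 'rV[R]_n -> Y) : Prop :=
  forall (a : R) (x y : 'rV[R]_n), T (a *: x + y) = a *: T x + T y.

Definition opnorm {R : realType} {n : nat} {Y : normedModType R}
  (T : 'rV[R]_n -> Y) : R :=
  sup [set `|T x| | x in (@ball1 R n)].

(* continuous linear functionals on Z = L(ell_1^n, Y);
   a functional is only evaluated on linear maps *)
Definition islinfun {R : realType} {n : nat} {Y : normedModType R}
  (phi : ('rV[R]_n -> Y) -> R) : Prop :=
  (forall (a : R) (S T : 'rV[R]_n -> Y), islin S -> islin T ->
     phi (fun x => a *: S x + T x) = a * phi S + phi T) /\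
  (exists C : R, forall T, islin T -> `|phi T| <= C * opnorm T).

Definition dualnorm {R : realType} {n : nat} {Y : normedModType R}
  (phi : ('rV[R]_n -> Y) -> R) : R :=
  sup [set `|phi T| | T in [set T : 'rV[R]_n -> Y | islin T /\ opnorm T <= 1]].

Definition Jset {R : realType} {n : nat} {Y : normedModType R}
  (T : 'rV[R]_n -> Y) : set (('rV[R]_n -> Y) -> R) :=
  [set phi | islinfun phi /\ dualnorm phi = 1 /\ phi T = opnorm T].

Definition eps_smooth {R : realType} {n : nat} {Y : normedModType R}
  (eps : R) (T : 'rV[R]_n -> Y) : Prop :=
  forall phi psi, Jset T phi -> Jset T psi ->
    dualnorm (fun S => phi S - psi S) <= eps.

Definition MT {R : realType} {n : nat} {Y : normedModType R}
  (T : 'rV[R]_n -> Y) : set 'rV[R]_n :=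
  [set x | norm1 x = 1 /\ `|T x| = opnorm T].

(* Since T is linear on l_1^n, ||T|| is the largest column norm ||T e_i||. If two
   distinct columns i <> j attain it, Hahn-Banach gives norming functionals f, g of
   T e_i and T e_j, and S |-> f (S e_i), S |-> g (S e_j) are two elements of J(T) at
   distance 2, as the operator x |-> x_i w_i - x_j w_j (w the normalised columns)
   witnesses.  So eps-smoothness with eps < 2 forces a unique maximal column i, and
   then only +-e_i, extreme points of the unit ball, can attain ||T||. *)

From HB Require Import structures.
From mathcomp Require Import all_boot all_order all_algebra.
From mathcomp Require Import all_classical all_reals all_analysis.
From mathcomp Require Import lra.
Set Implicit Arguments. Unset Strict Implicit. Unset Printing Implicit Defensive.
Import Order.TTheory GRing.Theory Num.Theory.
Import numFieldNormedType.Exports.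
Local Open Scope classical_set_scope.
Local Open Scope ring_scope.

Section HahnBanach.
Variables (R : realType) (Y : normedModType R).
Implicit Types (G : set (Y * R)) (y z : Y).

Definition graph_linear G :=
  forall a p q, G p -> G q -> G (a *: p.1 + q.1, a * p.2 + q.2).

Definition graph_normed G := forall p, G p -> p.2 <= `|p.1|.

Lemma graph_linear0 G p : graph_linear G -> G p -> G (0, 0).
Proof.
by move=> linG Gp; have := linG (-1) _ _ Gp Gp; rewrite scaleN1r mulN1r !addNr.
Qed.

Lemma graph_normed_functional G y r s : graph_linear G -> graph_normed G ->
  G (y, r) -> G (y, s) -> r = s.
Proof.
move=> linG normG Gr Gs.
have /= := normG _ (linG (-1) _ _ Gs Gr); have /= := normG _ (linG (-1) _ _ Gr Gs).
rewrite scaleN1r !addNr normr0; lra.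
Qed.

Section OneStepExtension.
Variable G : set (Y * R).
Hypotheses (linG : graph_linear G) (normG : graph_normed G) (G00 : G (0, 0)).

Lemma graph_gap z : exists c, (forall p, G p -> p.2 - `|p.1 - z| <= c) /\
  (forall q, G q -> c <= `|q.1 + z| - q.2).
Proof.
have gap p q : G p -> G q -> p.2 - `|p.1 - z| <= `|q.1 + z| - q.2.
  move=> Gp Gq; have /= := normG (linG 1 Gp Gq); rewrite scale1r mul1r.
  have := ler_normD (p.1 - z) (q.1 + z); rewrite addrACA addNr addr0.
  lra.
exists (sup [set p.2 - `|p.1 - z| | p in G]); split.
- move=> p Gp; apply: ub_le_sup; last by exists p.
  by exists (`|0 + z| - 0) => _ [q Gq <-]; exact: (gap q (0, 0)).
- move=> q Gq; apply: ge_sup; first by exists (0 - `|0 - z|), (0, 0).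
  by move=> _ [p Gp <-]; exact: gap.
Qed.

Lemma graph_gap_normed z c : (forall p, G p -> p.2 - `|p.1 - z| <= c) ->
  (forall q, G q -> c <= `|q.1 + z| - q.2) ->
  forall y r t, G (y, r) -> r + t * c <= `|y + t *: z|.
Proof.
move=> lo hi y r t Gyr.
(* Replacing (z, c) by (-z, -c) swaps the two bounds. *)
wlog t_ge0 : z c t lo hi / 0 <= t.
  move=> wlog_pos; have [|t_lt0] := leP 0 t; first exact: wlog_pos.
  rewrite -mulrNN -[t *: z]opprK -scaleNr -scalerN.
  apply: (wlog_pos (- z) (- c)); rewrite ?oppr_ge0 ?ltW //.
  - by move=> q Gq; rewrite opprK lerNr opprB; exact: hi.
  - by move=> p Gp; rewrite lerNl opprB; exact: lo.
have [->|t_gt0] := eqVneq t 0; first by rewrite mul0r scale0r !addr0; exact: normG Gyr.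
have {t_ge0}t_gt0 : 0 < t by rewrite lt_def t_gt0.
have /= := hi _ (linG t^-1 Gyr G00); rewrite !addr0 => hi_t.
have -> : y + t *: z = t *: (t^-1 *: y + z).
  by rewrite scalerDr scalerA mulfV ?gt_eqF ?scale1r.
move: hi_t; rewrite normrZ gtr0_norm // -(ler_pM2l t_gt0) mulrBr mulrA.
rewrite mulfV ?gt_eqF // mul1r; lra.
Qed.

Lemma graph_extend z : exists G',
  [/\ graph_linear G', graph_normed G', G `<=` G' & exists r, G' (z, r)].
Proof.
have [c [lo hi]] := graph_gap z.
exists [set q | exists p t, G p /\ q = (p.1 + t *: z, p.2 + t * c)]; split.
- move=> a _ _ [p [t [Gp ->]]] [q [s [Gq ->]]] /=.
  exists (a *: p.1 + q.1, a * p.2 + q.2), (a * t + s); split; first exact: linG.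
  congr pair => /=.
    by rewrite scalerDr scalerA scalerDl addrACA.
  by rewrite mulrDr mulrA mulrDl addrACA.
- by move=> _ [[y r] [t [Gyr ->]]]; exact: graph_gap_normed.
- by move=> p Gp; exists p, 0; rewrite scale0r mul0r !addr0; case: p Gp.
- by exists c, (0, 0), 1; rewrite /= scale1r mul1r !add0r.
Qed.

End OneStepExtension.

Lemma exists_norming_scalar y0 :
  exists f : {scalar Y}, (forall y, f y <= `|y|) /\ f y0 = `|y0|.
Proof.
(* The empty graph is admitted so that the union of the empty chain qualifies. *)
pose P G := [/\ graph_linear G, graph_normed G & G !=set0 -> G (y0, `|y0|)].
have [A [[linA normA A_base] A_max]] : exists A, P A /\ forall B, A `<` B -> ~ P B.
  apply: Zorn_bigcup => F FP Ftot; split.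
  - move=> a p q [X FX Xp] [W FW Wq].
    have [XW|WX] := Ftot _ _ FX FW.
    + by exists W => //; have [linW _ _] := FP _ FW; apply: linW => //; exact: XW.
    + by exists X => //; have [linX _ _] := FP _ FX; apply: linX => //; exact: WX.
  - by move=> p [X FX Xp]; have [_ normX _] := FP _ FX; exact: normX.
  - move=> [p [X FX Xp]]; have [_ _ X_y0] := FP _ FX.
    by exists X => //; apply: X_y0; exists p.
have A_y0 : A (y0, `|y0|).
  apply: contrapT => nA; pose L := [set (a *: y0, a * `|y0|) | a in [set: R]].
  apply: (A_max L); last split.
  - split; first by move=> p Ap; exfalso; apply/nA/A_base; exists p.
    by move=> /(_ (y0, `|y0|)) LA; apply/nA/LA; exists 1; rewrite ?scale1r ?mul1r.
  - move=> a _ _ [b _ <-] [d _ <-]; exists (a * b + d) => //=.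
    by rewrite scalerDl scalerA mulrDl mulrA.
  - by move=> _ [b _ <-] /=; rewrite normrZ ler_wpM2r // ler_norm.
  - by move=> _; exists 1; rewrite ?scale1r ?mul1r.
have A00 := graph_linear0 linA A_y0.
have A_total z : exists r, A (z, r).
  apply: contrapT => nz.
  have [G [linG normG AG [r Gzr]]] := graph_extend linA normA A00 z.
  apply: (A_max G); last by split => // _; exact: AG.
  by split=> // /(_ (z, r) Gzr) Azr; apply: nz; exists r.
pose f z := projT1 (cid (A_total z)).
have Af z : A (z, f z) by rewrite /f; case: cid.
have linf : scalar f.
  move=> a x y; apply: (graph_normed_functional linA normA (Af _)).
  exact: (linA a _ _ (Af x) (Af y)).
exists (HB.pack_for {scalar Y} f (GRing.isLinear.Build _ _ _ _ f linf)); split => [y|].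
- exact: normA (Af y).
- exact: graph_normed_functional linA normA (Af _) A_y0.
Qed.

Lemma norming_scalar_norm (f : {scalar Y}) y :
  (forall y, f y <= `|y|) -> `|f y| <= `|y|.
Proof.
move=> f_le; rewrite ler_norml f_le andbT lerNl -linearN.
by rewrite -[X in _ <= X](normrN y) f_le.
Qed.

End HahnBanach.

Section EllOne.
Variables (R : realType) (n : nat).
Implicit Types (x y z : 'rV[R]_n) (i j : 'I_n).

Lemma delta_coord i j : ('e_i : 'rV[R]_n) 0 j = (i == j)%:R.
Proof. by rewrite mxE eqxx eq_sym. Qed.

Lemma coord_le_norm1 x i : `|x 0 i| <= norm1 x.
Proof. by rewrite /norm1 (bigD1 i) //= lerDl sumr_ge0. Qed.

Lemma norm1_delta i : norm1 ('e_i : 'rV[R]_n) = 1.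
Proof.
rewrite /norm1 (bigD1 i) //= delta_coord eqxx normr1 big1 ?addr0 // => j ji.
by rewrite delta_coord eq_sym (negbTE ji) normr0.
Qed.

Lemma norm1N x : norm1 (- x) = norm1 x.
Proof. by apply: eq_bigr => i _; rewrite mxE normrN. Qed.

Lemma ball1_coord1 y i : ball1 y -> y 0 i = 1 -> y = 'e_i.
Proof.
rewrite /ball1 /norm1 /= (bigD1 i) //= => y_le1 yi.
have rest : \sum_(j < n | j != i) `|y 0 j| = 0.
  apply/eqP; rewrite eq_le sumr_ge0 // andbT; move: y_le1; rewrite yi normr1; lra.
apply/rowP => j; rewrite delta_coord; have [<-//|ij] := eqVneq i j.
by apply/normr0_eq0; apply: (psumr_eq0P _ rest) => //; rewrite eq_sym.
Qed.

Lemma ExtB1_delta i : ExtB1 ('e_i : 'rV[R]_n).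
Proof.
split=> [|y z t y_le1 z_le1 /andP[t_gt0 t_lt1] e_yz].
  by rewrite /ball1 /= norm1_delta.
have /= := congr1 (fun v : 'rV[R]_n => v 0 i) e_yz.
rewrite delta_coord eqxx mulr1n !mxE => /esym e_i.
have := le_trans (ler_normlW (coord_le_norm1 y i)) y_le1.
have := le_trans (ler_normlW (coord_le_norm1 z i)) z_le1.
move=> zi_le1 yi_le1.
have yi : y 0 i = 1 by apply/eqP; rewrite eq_le yi_le1 /=; nra.
have zi : z 0 i = 1 by apply/eqP; rewrite eq_le zi_le1 /=; nra.
by rewrite (ball1_coord1 y_le1 yi) (ball1_coord1 z_le1 zi).
Qed.

End EllOne.

Section Operators.
Variables (R : realType) (n : nat) (Y : normedModType R).
Implicit Types (S : 'rV[R]_n -> Y) (x : 'rV[R]_n) (i j : 'I_n).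

Definition linmap S (linS : islin S) : {linear 'rV[R]_n -> Y} :=
  HB.pack S (GRing.isLinear.Build _ _ _ _ S linS).

Lemma islin_coord_sum S x : islin S -> S x = \sum_i x 0 i *: S 'e_i.
Proof.
move=> linS; rewrite {1}(row_sum_delta x) (_ : S = linmap linS) // linear_sum.
by apply: eq_bigr => i _; rewrite linearZ.
Qed.

Lemma islinN S x : islin S -> S (- x) = - S x.
Proof. by move=> linS; rewrite (_ : S = linmap linS) // linearN. Qed.

Lemma islin_nonzero_column S : islin S -> ~ (forall x, S x = 0) ->
  exists i, S 'e_i != 0.
Proof.
move=> linS S_neq0; apply: contrapT => S_cols0; apply: S_neq0 => x.
rewrite islin_coord_sum // big1 // => i _.
have [->|Si_neq0] := eqVneq (S 'e_i) 0; first exact: scaler0.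
by case: S_cols0; exists i.
Qed.

Lemma norm_le_columns S x c : islin S -> (forall i, `|S 'e_i| <= c) ->
  `|S x| <= norm1 x * c.
Proof.
move=> linS S_le; rewrite islin_coord_sum // /norm1 mulr_suml.
apply: le_trans (ler_norm_sum _ _ _) _; apply: ler_sum => i _.
by rewrite normrZ ler_wpM2l.
Qed.

Lemma opnorm_ub S x : islin S -> ball1 x -> `|S x| <= opnorm S.
Proof.
move=> linS x_le1; apply: ub_le_sup; last by exists x.
exists (\sum_j `|S 'e_j|) => _ [y y_le1 <-].
have cols_le i : `|S 'e_i| <= \sum_j `|S 'e_j|.
  by rewrite (bigD1 i) //= lerDl sumr_ge0.
apply: le_trans (norm_le_columns y linS cols_le) _.
by rewrite ler_piMl // sumr_ge0.
Qed.

Lemma opnorm_column S i : islin S -> `|S 'e_i| <= opnorm S.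
Proof. by move=> linS; apply: opnorm_ub => //; rewrite /ball1 /= norm1_delta. Qed.

Lemma opnorm_le_columns S c : islin S -> 0 <= c ->
  (forall i, `|S 'e_i| <= c) -> opnorm S <= c.
Proof.
move=> linS c_ge0 S_le; apply: ge_sup.
  exists `|S 0|, 0 => //; rewrite /ball1 /= /norm1 big1 // => i _.
  by rewrite mxE normr0.
move=> _ [x x_le1 <-]; apply: le_trans (norm_le_columns x linS S_le) _.
by rewrite ler_piMl.
Qed.

Lemma opnorm_max_column S i1 : islin S ->
  exists i, opnorm S = `|S 'e_i| /\ forall j, `|S 'e_j| <= `|S 'e_i|.
Proof.
move=> linS; have [i _ S_le] := @arg_maxP _ _ _ i1 predT (fun i => `|S 'e_i|) isT.
exists i; split=> [|j]; last exact: S_le.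
apply/eqP; rewrite eq_le opnorm_column // andbT.
by apply: opnorm_le_columns => // j; exact: S_le.
Qed.

Lemma norm_lt_columns S x i j : islin S -> (forall k, `|S 'e_k| <= `|S 'e_i|) ->
  x 0 j != 0 -> `|S 'e_j| < `|S 'e_i| -> `|S x| < norm1 x * `|S 'e_i|.
Proof.
move=> linS S_le xj_neq0 Sj_lt; rewrite islin_coord_sum // /norm1 mulr_suml.
apply: le_lt_trans (ler_norm_sum _ _ _) _.
rewrite (bigD1 j) //= [ltRHS](bigD1 j) //= normrZ.
apply: ltr_leD; first by rewrite ltr_pM2l ?normr_gt0.
by apply: ler_sum => k _; rewrite normrZ ler_wpM2l.
Qed.

Lemma MT_strict_max_column S i : islin S ->
  (forall j, j != i -> `|S 'e_j| < `|S 'e_i|) -> MT S = [set 'e_i; - 'e_i].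
Proof.
move=> linS S_lt.
have S_le j : `|S 'e_j| <= `|S 'e_i|.
  by have [->//|ji] := eqVneq j i; exact/ltW/S_lt.
have opS : opnorm S = `|S 'e_i|.
  by apply/eqP; rewrite eq_le opnorm_column // andbT opnorm_le_columns.
apply/seteqP; split=> [x [x_eq1 Sx]|x [->|->]]; last 2 first.
- by split; rewrite ?norm1_delta.
- by split; rewrite ?norm1N ?norm1_delta // islinN // normrN.
have x_supp j : j != i -> x 0 j = 0.
  move=> ji; apply/eqP/negPn/negP => xj_neq0.
  have := norm_lt_columns linS S_le xj_neq0 (S_lt j ji).
  by rewrite x_eq1 mul1r Sx opS ltxx.
have x_eq : x = x 0 i *: 'e_i.
  apply/rowP => k; rewrite mxE delta_coord.
  by have [<-|ik] := eqVneq i k; rewrite ?mulr1 // mulr0 x_supp // eq_sym.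
have : `|x 0 i| = 1.
  rewrite -x_eq1 /norm1 (bigD1 i) //= big1 ?addr0 // => k ki.
  by rewrite x_supp // normr0.
case: ger0P => _ xi; [left | right]; rewrite x_eq ?xi ?scale1r //.
by rewrite -[x 0 i]opprK xi scaleN1r.
Qed.

End Operators.

Section NormingFunctionals.
Variables (R : realType) (n : nat) (Y : normedModType R).
Implicit Types (S T : 'rV[R]_n -> Y) (i j : 'I_n).

Lemma dualnorm_eq (phi : ('rV[R]_n -> Y) -> R) C :
  (forall S, islin S -> opnorm S <= 1 -> `|phi S| <= C) ->
  (exists2 S, islin S /\ opnorm S <= 1 & `|phi S| = C) -> dualnorm phi = C.
Proof.
move=> phi_le [S0 S0_unit phiS0]; apply/eqP; rewrite eq_le; apply/andP; split.
- apply: ge_sup; first by exists `|phi S0|, S0.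
  by move=> _ [S [linS S_le1] <-]; exact: phi_le.
- rewrite -phiS0; apply: ub_le_sup; last by exists S0.
  by exists C => _ [S [linS S_le1] <-]; exact: phi_le.
Qed.

Lemma islinZ a S : islin S -> islin (fun x => a *: S x).
Proof. by move=> linS b x y; rewrite linS scalerDr !scalerA mulrC. Qed.

Lemma Jset_column (f : {scalar Y}) T i : (forall y, f y <= `|y|) ->
  islin T -> 0 < opnorm T -> f (T 'e_i) = opnorm T -> Jset T (fun S => f (S 'e_i)).
Proof.
move=> f_le linT T_gt0 fTi.
have f_col S : islin S -> `|f (S 'e_i)| <= opnorm S.
  by move=> linS; apply: le_trans (norming_scalar_norm _ f_le) (opnorm_column _ linS).
split; [split|split] => //.
- by move=> a S S' _ _; rewrite linearP.
- by exists 1 => S linS; rewrite mul1r f_col.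
apply: dualnorm_eq => [S linS S_le1|]; first exact: le_trans (f_col S linS) S_le1.
have lin_scaled := islinZ (opnorm T)^-1 linT.
exists (fun x => (opnorm T)^-1 *: T x); first split => //.
  apply: opnorm_le_columns => // j; rewrite normrZ gtr0_norm ?invr_gt0 //.
  by rewrite ler_pdivrMl // mulr1 opnorm_column.
by rewrite scalarZ fTi mulVf ?gt_eqF // normr1.
Qed.

Lemma dualnorm_column_diff (f g : {scalar Y}) (v w : Y) i j :
  (forall y, f y <= `|y|) -> (forall y, g y <= `|y|) ->
  `|v| = 1 -> `|w| = 1 -> f v = 1 -> g w = 1 -> i != j ->
  dualnorm (fun S => f (S 'e_i) - g (S 'e_j)) = 2.
Proof.
move=> f_le g_le v1 w1 fv gw ij; apply: dualnorm_eq => [S linS S_le1|].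
  apply: le_trans (ler_normB _ _) _.
  have := le_trans (norming_scalar_norm _ f_le) (opnorm_column i linS).
  have := le_trans (norming_scalar_norm _ g_le) (opnorm_column j linS).
  lra.
pose S2 (x : 'rV[R]_n) := x 0 i *: v - x 0 j *: w.
have S2_col k : S2 'e_k = (i == k)%:R *: v - (j == k)%:R *: w.
  by rewrite /S2 !delta_coord (eq_sym k i) (eq_sym k j).
have linS2 : islin S2.
  by move=> a x y; rewrite /S2 !mxE !scalerDl scalerBr !scalerA opprD addrACA.
have S2_le1 : opnorm S2 <= 1.
  apply: opnorm_le_columns => // k; rewrite S2_col.
  have [<-|ik] := eqVneq i k.
    by rewrite mulr1n (eq_sym j i) (negbTE ij) scale0r subr0 scale1r v1.
  have [_|jk] := eqVneq j k.
    by rewrite mulr1n scale0r scale1r sub0r normrN w1.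
  by rewrite !scale0r subr0 normr0.
exists S2 => //=; rewrite !S2_col !eqxx (eq_sym j i) (negbTE ij) !scale0r subr0 sub0r.
by rewrite !scale1r linearN fv gw opprK ger0_norm.
Qed.

Lemma Jset_far_columns T i j : islin T -> i != j -> 0 < opnorm T ->
  `|T 'e_i| = opnorm T -> `|T 'e_j| = opnorm T ->
  exists phi psi, [/\ Jset T phi, Jset T psi & dualnorm (fun S => phi S - psi S) = 2].
Proof.
move=> linT ij T_gt0 Ti Tj.
have [f [f_le fTi]] := exists_norming_scalar (T 'e_i).
have [g [g_le gTj]] := exists_norming_scalar (T 'e_j).
exists (fun S => f (S 'e_i)), (fun S => g (S 'e_j)); split.
- by apply: Jset_column; rewrite ?fTi.
- by apply: Jset_column; rewrite ?gTj.
pose unit_col k := (opnorm T)^-1 *: T 'e_k.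
have unit_colE k : `|T 'e_k| = opnorm T -> `|unit_col k| = 1.
  by move=> Tk; rewrite normrZ gtr0_norm ?invr_gt0 // Tk mulVf ?gt_eqF.
apply: (dualnorm_column_diff f_le g_le (unit_colE i Ti) (unit_colE j Tj)) => //.
- by rewrite scalarZ fTi Ti mulVf ?gt_eqF.
- by rewrite scalarZ gTj Tj mulVf ?gt_eqF.
Qed.

End NormingFunctionals.

Theorem proposition3p3 (R : realType) (n : nat) (Y : normedModType R)
  (T : 'rV[R]_n -> Y) :
  islin T -> ~ (forall x, T x = 0) ->
  (exists eps : R, 0 <= eps < 2 /\ eps_smooth eps T) ->
  exists u : 'rV[R]_n, ExtB1 u /\ MT T = [set u; - u].
Proof.
move=> linT T_neq0 [eps [/andP[_ eps_lt2] T_smooth]].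
have [i1 Ti1_neq0] := islin_nonzero_column linT T_neq0.
have [i [opT T_le]] := opnorm_max_column i1 linT.
have T_gt0 : 0 < opnorm T.
  by rewrite opT; apply: lt_le_trans (T_le i1); rewrite normr_gt0.
suff T_lt j : j != i -> `|T 'e_j| < `|T 'e_i|.
  by exists 'e_i; split; [exact: ExtB1_delta | exact: MT_strict_max_column].
move=> ji; rewrite lt_neqAle T_le andbT; apply/eqP; rewrite -opT => Tj.
have [phi [psi [Jphi Jpsi far]]] := Jset_far_columns linT ji T_gt0 Tj (esym opT).
by have := T_smooth _ _ Jphi Jpsi; rewrite far; lra.
Qed.
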